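(* Let $b$ be an angular kernel on $S^{d-1}$ and $c_K,C_P>0$. Assume that for every smooth $f:S^{d-1}\to(0,\infty)$ with $f(\sigma)=f(-\sigma)$, \[\int_{S^{d-1}}\Gamma^2_{\mathcal B,\Delta}(\log f,\log f)f\,d\sigma\ge c_K\int_{S^{d-1}}\frac{|\nabla f|^2}{f}d\sigma\quad\text{and}\quad C_P\int_{S^{d-1}}|\nabla f|^2d\sigma\ge\iint_{S^{d-1}\times S^{d-1}}(f(\sigma')-f(\sigma))^2b(\sigma'\cdot\sigma)d\sigma'd\sigma.\] Then for every such $f$, \[\int_{S^{d-1}}\Gamma^2_{\mathcal B,\Delta}(\log f,\log f)f\,d\sigma\ge\frac{2c_K}{C_P}\iint_{S^{d-1}\times S^{d-1}}\frac{(f(\sigma')-f(\sigma))^2}{f(\sigma')+f(\sigma)}b(\sigma'\cdot\sigma)d\sigma'd\sigma,\] i.e. $\Lambda_b\ge 2c_K/C_P$.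
   Context: An angular kernel is $b:[-1,1]\to[0,\infty)$ with $\int(1-(e\cdot\sigma)^2)b(e\cdot\sigma)d\sigma<\infty$. $\mathcal Bg(\sigma)=\int_{S^{d-1}}(g(\sigma')-g(\sigma))b(\sigma'\cdot\sigma)d\sigma'$; $\Gamma_\Delta(g,h)=\nabla g\cdot\nabla h$ (spherical gradient); $\Gamma^2_{\mathcal B,\Delta}(g,h)=\frac12(\mathcal B\Gamma_\Delta(g,h)-\Gamma_\Delta(\mathcal Bg,h)-\Gamma_\Delta(g,\mathcal Bh))$. $\Lambda_b$ is the largest constant for which the displayed conclusion holds for all even positive smooth $f$. *)

From HB Require Import structures.
From mathcomp Require Import all_boot all_order all_algebra.
From mathcomp Require Import all_classical all_reals all_analysis.
Set Implicit Arguments. Unset Strict Implicit. Unset Printing Implicit Defensive.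
Import Order.TTheory GRing.Theory Num.Theory.
Import numFieldNormedType.Exports.
Local Open Scope classical_set_scope.
Local Open Scope ring_scope.

Section Sphere.
Variable R : realType.
Variable d : nat.

Notation vec := 'rV[R]_d.

Definition dotv (u v : vec) : R := \sum_(i < d) u 0 i * v 0 i.
Definition enorm (x : vec) : R := Num.sqrt (dotv x x).

Definition on_sphere (x : vec) : Prop := enorm x = 1.

(* radial projection x |-> x/|x| (0-homogeneous extension of sphere functions) *)
Definition hext (f : vec -> R) : vec -> R := fun x => f ((enorm x)^-1 *: x).

Definition vec_of_seq (s : seq R) : vec := \row_(i < d) nth 0 s i.

Fixpoint iintR (n : nat) (H : seq R -> R) : R :=
  match n with
  | 0%N => H [::]
  | n'.+1 => Rintegral lebesgue_measure `[-1, 1]%classic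
               (fun t => iintR n' (fun s => H (t :: s)))
  end.

Fixpoint iintE (n : nat) (H : seq R -> \bar R) : \bar R :=
  match n with
  | 0%N => H [::]
  | n'.+1 => (\int[lebesgue_measure]_(t in `[(-1)%R, 1%R]%classic)
               iintE n' (fun s => H (t :: s)))%E
  end.

(* Integral over S^{d-1} w.r.t. the surface measure, via the cone formula
   int_{S^{d-1}} g dsigma = d * int_{B_1 \ {0}} g(x/|x|) dx. *)
Definition sphere_int (g : vec -> R) : R :=
  d%:R * iintR d (fun s => let x := vec_of_seq s in
                   if (x != 0) && (enorm x <= 1) then g ((enorm x)^-1 *: x) else 0).

Definition sphere_intE (g : vec -> \bar R) : \bar R :=
  (d%:R%:E * iintE d (fun s => let x := vec_of_seq s in
                   if (x != 0%R) && (enorm x <= 1)%R then g ((enorm x)^-1 *: x)%R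
                   else 0%E))%E.

Fixpoint iterD (vs : seq vec) (F : vec -> R) : vec -> R :=
  match vs with
  | [::] => F
  | v :: vs' => fun x => derive (iterD vs' F) x v
  end.

Definition smooth_on (U : set vec) (F : vec -> R) : Prop :=
  forall (vs : seq vec) (x : vec), U x -> differentiable (iterD vs F) x.

Definition sphere_smooth (f : vec -> R) : Prop :=
  smooth_on [set x | x != 0] (hext f).

Definition even_pos_smooth (f : vec -> R) : Prop :=
  sphere_smooth f /\ (forall s, on_sphere s -> 0 < f s)
  /\ (forall s, on_sphere s -> f s = f (- s)).

(* spherical gradient = Euclidean gradient of the 0-homogeneous extension *)
Definition sgrad (f : vec -> R) (s : vec) : vec :=
  \row_(i < d) derive (hext f) s (delta_mx 0 i).

Definition Gamma_Delta (g h : vec -> R) : vec -> R :=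
  fun s => dotv (sgrad g s) (sgrad h s).

(* B g (sigma) = int (g(sigma') - g(sigma)) b(sigma'.sigma) dsigma',
   understood as a principal value (cut-off near sigma'.sigma = +-1) *)
Definition Bop (b : R -> R) (g : vec -> R) : vec -> R :=
  fun s => lim (sphere_int (fun s' =>
               if `|dotv s' s| <= 1 - eps then (g s' - g s) * b (dotv s' s)
               else 0) @[eps --> 0^'+]).

Definition Gamma2 (b : R -> R) (g h : vec -> R) : vec -> R :=
  fun s => 2^-1 * (Bop b (Gamma_Delta g h) s
                   - Gamma_Delta (Bop b g) h s - Gamma_Delta g (Bop b h) s).

Definition angular_kernel (b : R -> R) : Prop :=
  measurable_fun (`[-1, 1]%classic : set R) b /\
  (forall t, -1 <= t <= 1 -> 0 <= b t) /\
  (forall e : vec, on_sphere e ->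
     (sphere_intE (fun s => ((1 - (dotv e s)^+2) * b (dotv e s))%:E) < +oo)%E).

End Sphere.

(** The Poincare inequality, applied to the admissible function g = sqrt(2 f),
    bounds the Dirichlet form of f with the weight 1/(f' + f): indeed
    |grad g|^2 = |grad f|^2 / (2 f), and pointwise
    (f' - f)^2 / (f' + f) <= (g' - g)^2 because (g' + g)^2 <= 2 (g'^2 + g^2).
    Hence the weighted form is at most (C_P / 2) int |grad f|^2 / f, which the
    curvature hypothesis bounds by (C_P / (2 c_K)) int Gamma2(log f, log f) f. *)

From Pilot Require Import Defs.
From HB Require Import structures.
From mathcomp Require Import all_boot all_order all_algebra.
From mathcomp Require Import all_classical all_reals all_analysis.
From mathcomp Require Import ring lra.
Import Order.TTheory GRing.Theory Num.Theory.
Import numFieldNormedType.Exports.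
Local Open Scope classical_set_scope.
Local Open Scope ring_scope.

Section integral_without_measurability.
Import HBNNSimple.
Local Open Scope ereal_scope.
Context d (T : measurableType d) (R : realType) (mu : {measure set T -> \bar R}).
Implicit Types (f g : T -> \bar R) (D : set T).

(* The section-local [nnintegral] of lebesgue_integral_definition, in terms of
   which [integral] is defined. *)
Let nnint f := ereal_sup [set sintegral mu h |
  h in [set h : {nnsfun T >-> R} | forall x, (h x)%:E <= f x]].

Let integralE D f :
  \int[mu]_(x in D) f x = nnint ((f \_ D)^\+) - nnint ((f \_ D)^\-).
Proof. by []. Qed.

Let le_nnint f g : (forall x, f x <= g x) -> nnint f <= nnint g.
Proof.
move=> fg; apply: ereal_sup_le => _ [h hf <-].
by exists h => // x; exact: le_trans (hf x) (fg x).
Qed.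

Let nnintZl (k : R) f : (0 < k)%R -> nnint (fun x => k%:E * f x) = k%:E * nnint f.
Proof.
move=> k0; rewrite /nnint -ereal_sup_pZl //; congr ereal_sup.
apply/seteqP; split=> [_ [h hf <-]|_ [_ [h hf <-] <-]].
- have ki0 : (0 <= k^-1)%R by rewrite invr_ge0 ltW.
  exists (sintegral mu (scale_nnsfun h ki0)).
    exists (scale_nnsfun h ki0) => // x /=.
    by rewrite EFinM lee_pdivrMl // ?muleA -?EFinM ?mulrC.
  by rewrite sintegralrM muleA -EFinM divff ?gt_eqF // mul1e.
- have k0' : (0 <= k)%R by rewrite ltW.
  exists (scale_nnsfun h k0'); last exact: sintegralrM.
  by move=> x /=; rewrite EFinM lee_pmul2l ?lte_fin.
Qed.

Lemma le_integral_pointwise D f g : (forall x, D x -> f x <= g x) ->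
  \int[mu]_(x in D) f x <= \int[mu]_(x in D) g x.
Proof.
move=> fg; have fgD x : (f \_ D) x <= (g \_ D) x by exact: lee_restrict.
have fgT : {in setT, forall x, (f \_ D) x <= (g \_ D) x} by move=> x _; exact: fgD.
rewrite !integralE leeB // le_nnint // => x.
  exact: funepos_le fgT x (in_setT x).
exact: funeneg_le fgT x (in_setT x).
Qed.

Let gt0_muleBr (k : R) (a b : \bar R) : (0 < k)%R ->
  k%:E * (a - b) = k%:E * a - k%:E * b.
Proof.
move=> k0; have k0' : (0 < k%:E)%E by rewrite lte_fin.
case: a => [a| |]; case: b => [b| |] /=; rewrite ?gt0_muley ?gt0_muleNy //.
by rewrite -!EFinM mulrBr.
Qed.

Lemma integralZl_gt0 (k : R) D f : (0 < k)%R ->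
  \int[mu]_(x in D) (k%:E * f x) = k%:E * \int[mu]_(x in D) f x.
Proof.
move=> k0; have k0' : (0 <= k)%R by rewrite ltW.
rewrite !integralE.
have -> : (fun x => k%:E * f x) \_ D = (fun x => k%:E * (f \_ D) x).
  by apply/funext => x; rewrite /patch; case: ifP; rewrite ?mule0.
by rewrite gt0_muleBr // ge0_funeposM // ge0_funenegM // !nnintZl.
Qed.
End integral_without_measurability.

Lemma RintegralZl_gt0 d (T : measurableType d) (R : realType)
    (mu : {measure set T -> \bar R}) D (k : R) (f : T -> R) : 0 < k ->
  Rintegral mu D (fun x => k * f x) = k * Rintegral mu D f.
Proof.
move=> k0; rewrite /Rintegral.
under eq_integral do rewrite EFinM.
rewrite integralZl_gt0 //; case: (\int[mu]_(x in D) (f x)%:E)%E => [r| |] //=.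
  by rewrite gt0_muley ?lte_fin ?mulr0.
by rewrite gt0_muleNy ?lte_fin ?mulr0.
Qed.

Section sphere.
Context {R : realType} {d : nat}.
Notation vec := 'rV[R]_d.
Implicit Types (x s u v : vec).

Lemma dotvvE x : dotv x x = \sum_(i < d) x 0 i ^+ 2.
Proof. by rewrite /dotv; apply: eq_bigr => i _; rewrite expr2. Qed.

Lemma dotvv_ge0 x : 0 <= dotv x x.
Proof. by rewrite dotvvE sumr_ge0 // => i _; rewrite sqr_ge0. Qed.

Lemma dotvv_eq0 x : (dotv x x == 0) = (x == 0).
Proof.
apply/eqP/eqP => [x0|->]; last by rewrite /dotv big1 // => i _; rewrite mxE mul0r.
have {}x0 := psumr_eq0P (fun i _ => sqr_ge0 (x 0 i)) (etrans (esym (dotvvE x)) x0).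
apply/matrixP => i j; rewrite mxE (ord1 i).
by apply/eqP; rewrite -sqrf_eq0; apply/eqP; exact: x0.
Qed.

Lemma dotvZZ (c : R) u v : dotv (c *: u) (c *: v) = c ^+ 2 * dotv u v.
Proof. by rewrite /dotv mulr_sumr; apply: eq_bigr => i _; rewrite !mxE; ring. Qed.

Lemma on_sphereE s : on_sphere s <-> dotv s s = 1.
Proof.
rewrite /on_sphere /enorm; split => [s1|->]; last exact: sqrtr1.
by rewrite -[LHS]sqr_sqrtr ?dotvv_ge0 // s1 expr1n.
Qed.

Lemma on_sphere_normalize x : x != 0 -> on_sphere ((enorm x)^-1 *: x).
Proof.
rewrite -dotvv_eq0 => x0; apply/on_sphereE.
rewrite dotvZZ exprVn sqr_sqrtr ?dotvv_ge0 // mulVf //.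
Qed.

Lemma on_sphere_neq0 s : on_sphere s -> s != 0.
Proof. by move/on_sphereE; rewrite -dotvv_eq0 => ->; exact: oner_neq0. Qed.

Lemma hext_on_sphere (f : vec -> R) s : on_sphere s -> hext f s = f s.
Proof. by rewrite /hext /on_sphere => ->; rewrite invr1 scale1r. Qed.

Lemma dotv_on_sphere_bound u v : on_sphere u -> on_sphere v -> -1 <= dotv u v <= 1.
Proof.
move=> /on_sphereE uu /on_sphereE vv.
have sqD : 0 <= \sum_(i < d) (u 0 i + v 0 i) ^+ 2 by apply: sumr_ge0 => i _; exact: sqr_ge0.
have sqB : 0 <= \sum_(i < d) (u 0 i - v 0 i) ^+ 2 by apply: sumr_ge0 => i _; exact: sqr_ge0.
have eD : \sum_(i < d) (u 0 i + v 0 i) ^+ 2 = dotv u u + dotv v v + 2 * dotv u v.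
  by rewrite /dotv mulr_sumr -!big_split; apply: eq_bigr => i _ /=; ring.
have eB : \sum_(i < d) (u 0 i - v 0 i) ^+ 2 = dotv u u + dotv v v - 2 * dotv u v.
  by rewrite /dotv mulr_sumr -big_split -sumrB; apply: eq_bigr => i _ /=; ring.
rewrite eD uu vv in sqD; rewrite eB uu vv in sqB.
by apply/andP; split; lra.
Qed.

Lemma eq_sphere_int (g1 g2 : vec -> R) : (forall s, on_sphere s -> g1 s = g2 s) ->
  sphere_int g1 = sphere_int g2.
Proof.
move=> g12; rewrite /sphere_int; congr (_ * _); congr iintR; apply/funext => t /=.
by case: ifP => // /andP[x0 _]; apply: g12; exact: on_sphere_normalize.
Qed.

Lemma iintRZl n (k : R) (H : seq R -> R) : 0 < k ->
  iintR n (fun t => k * H t) = k * iintR n H.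
Proof.
elim: n H => [|n IH] H k0 //=; rewrite -RintegralZl_gt0 //.
by congr Rintegral; apply/funext => t; exact: IH.
Qed.

Lemma sphere_intZl (k : R) (g : vec -> R) : 0 < k ->
  sphere_int (fun s => k * g s) = k * sphere_int g.
Proof.
move=> k0; rewrite /sphere_int mulrCA -(iintRZl _ _ _ k0); congr (_ * iintR _ _).
by apply/funext => t /=; case: ifP; rewrite ?mulr0.
Qed.

Lemma le_iintE n (H1 H2 : seq R -> \bar R) : (forall t, H1 t <= H2 t)%E ->
  (iintE n H1 <= iintE n H2)%E.
Proof.
elim: n H1 H2 => [|n IH] H1 H2 H12 //=.
by apply: le_integral_pointwise => t _; exact: IH.
Qed.

Lemma le_sphere_intE (g1 g2 : vec -> \bar R) :
  (forall s, on_sphere s -> g1 s <= g2 s)%E -> (sphere_intE g1 <= sphere_intE g2)%E.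
Proof.
move=> g12; apply: lee_wpmul2l; first by rewrite lee_fin.
apply: le_iintE => t /=; case: ifP => // /andP[x0 _]; apply: g12.
exact: on_sphere_normalize.
Qed.

End sphere.

Section differentiable_near.
Context {R : realType} {V W : normedModType R}.

Lemma near0_differentiable (h : V -> W) x :
  (\forall y \near x, h y = 0) -> differentiable h x.
Proof.
move=> h0; have hx : h x = 0 := nbhs_singleton h0.
have dh : h \o shift x = cst (h x) + \0 +o_ 0 id.
  apply/eqaddoP => e e0; have := (nbhs0P _ x).1 h0; apply: filterS => y /= hy.
  suff -> : (h \o +%R^~ x - (cst (h x) + \0)) y = 0 by rewrite normr0 mulr_ge0 // ltW.
  by change (h (y + x) - (h x + 0) = 0); rewrite [y + x]addrC hy hx !addr0 subrr.
have dh0 : 'd h x = 0 :> (V -> W) by apply/diff_unique => //; exact: cst_continuous.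
by apply/diff_locallyP; rewrite dh0; split => //; exact: cst_continuous.
Qed.

Lemma near_eq_differentiable (f g : V -> W) x :
  (\forall y \near x, f y = g y) -> differentiable f x -> differentiable g x.
Proof.
move=> fg df; have -> : g = f + (g - f) by apply/funext => y /=; rewrite addrC subrK.
apply: differentiableD => //; apply: near0_differentiable.
by apply: filterS fg => y /= fgy; change (g y - f y = 0); rewrite fgy subrr.
Qed.

End differentiable_near.

Section scalar_chain_rule.
Context {R : realType} {V : normedModType R}.

Lemma differentiable_scalar_comp {F : V -> R} {phi : R -> R} {x a} :
  differentiable F x -> is_derive (F x) 1 phi a ->
  differentiable (fun y => phi (F y)) x.
Proof.
by move=> dF dphi; apply: differentiable_comp dF _; case: dphi => /derivable1_diffP.
Qed.

Lemma derive_scalar_comp {F : V -> R} {phi : R -> R} {x a} v :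
  differentiable F x -> is_derive (F x) 1 phi a ->
  'D_v (fun y => phi (F y)) x = a * 'D_v F x.
Proof.
move=> dF dphi; have dphi' : differentiable phi (F x).
  by case: dphi => /derivable1_diffP.
rewrite (deriveE v (differentiable_scalar_comp dF dphi)) (deriveE v dF) diff_comp //=.
rewrite -[X in 'd phi (F x) X]mulr1 -[_ * 1]/(('d F x v) *: (1 : R)) linearZ /=.
by rewrite mulrC -derive1E' // derive1E; case: dphi => _ ->.
Qed.

End scalar_chain_rule.

Section smooth_on.
Context {R : realType} {d : nat}.
Notation vec := 'rV[R]_d.

Lemma iterD_rcons vs v (G : vec -> R) : Defs.iterD vs ('D_v G) = Defs.iterD (rcons vs v) G.
Proof. by elim: vs => [|w vs IH] //=; rewrite IH. Qed.

Context {U : set vec}.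
Hypothesis oU : open U.
Notation smooth := (smooth_on U).

Let nearU x : U x -> \forall y \near x, U y.
Proof. by move=> Ux; apply: open_nbhs_nbhs. Qed.

Lemma smooth_on_derive_closed (Q : (vec -> R) -> Prop) :
  (forall H, Q H -> forall x, U x -> differentiable H x) ->
  (forall H v, Q H -> exists2 H', Q H' & forall x, U x -> 'D_v H x = H' x) ->
  forall H, Q H -> smooth H.
Proof.
move=> Qdiff QD H QH vs.
have [H' QH' eH'] : exists2 H', Q H' & forall x, U x -> Defs.iterD vs H x = H' x.
  elim: vs => [|v vs [H1 QH1 eH1]]; first by exists H.
  have [H2 QH2 eH2] := QD H1 v QH1; exists H2 => // x Ux /=.
  rewrite -eH2 //; apply: near_eq_derive; near=> y; apply: eH1; near: y.
  exact: nearU.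
move=> x Ux; apply: (@near_eq_differentiable _ _ _ H'); last exact: Qdiff.
near=> y; rewrite eH' //; near: y; exact: nearU.
Unshelve. all: by end_near.
Qed.

Lemma smooth_on_differentiable {G x} : smooth G -> U x -> differentiable G x.
Proof. by move=> sG; exact: sG [::] x. Qed.

Lemma smooth_on_derive v G : smooth G -> smooth ('D_v G).
Proof. by move=> sG vs x Ux; rewrite iterD_rcons; exact: sG. Qed.

Lemma smooth_on_cst c : smooth (fun _ => c).
Proof.
apply: (smooth_on_derive_closed (fun H => exists c, H = fun _ => c)); last by exists c.
  by move=> _ [c' ->] x _; exact: differentiable_cst.
by move=> _ v [c' ->]; exists (fun _ => 0) => [|x _]; [exists 0 | exact: derive_cst].
Qed.

Definition sum_of_products (s : seq ((vec -> R) * (vec -> R))) : vec -> R :=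
  fun x => \sum_(p <- s) p.1 x * p.2 x.

Fixpoint derive_products v (s : seq ((vec -> R) * (vec -> R))) :=
  if s is p :: s' then
    (p.1, 'D_v p.2) :: (p.2, 'D_v p.1) :: derive_products v s'
  else [::].

Fixpoint smooth_pairs (s : seq ((vec -> R) * (vec -> R))) : Prop :=
  if s is p :: s' then [/\ smooth p.1, smooth p.2 & smooth_pairs s'] else True.

Lemma sum_of_products_cons p s x :
  sum_of_products (p :: s) x = p.1 x * p.2 x + sum_of_products s x.
Proof. exact: big_cons. Qed.

Lemma differentiable_sum_of_products s x :
  smooth_pairs s -> U x -> differentiable (sum_of_products s) x.
Proof.
move=> + Ux; elim: s => [_|p s IH [s1 s2 /IH ds]].
  have -> : sum_of_products [::] = cst 0 by apply/funext => y; exact: big_nil.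
  exact: differentiable_cst.
apply: (@near_eq_differentiable _ _ _ (fun y => p.1 y * p.2 y + sum_of_products s y)).
  by near=> y; rewrite sum_of_products_cons.
apply: differentiableD ds; apply: differentiableM;
  exact: smooth_on_differentiable Ux.
Unshelve. all: by end_near.
Qed.

Lemma derive_sum_of_products s v x : smooth_pairs s -> U x ->
  'D_v (sum_of_products s) x = sum_of_products (derive_products v s) x.
Proof.
move=> + Ux; elim: s => [_|p s IH [s1 s2 ss]].
  have -> : sum_of_products [::] = cst 0 by apply/funext => y; exact: big_nil.
  by rewrite derive_cst.
have d1 := smooth_on_differentiable s1 Ux; have d2 := smooth_on_differentiable s2 Ux.
rewrite (near_eq_derive (g := fun y => p.1 y * p.2 y + sum_of_products s y)); last first.
  by near=> y; rewrite sum_of_products_cons.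
rewrite deriveD ?deriveM ?IH //=.
- by rewrite !sum_of_products_cons addrA.
- exact: diff_derivable.
- exact: diff_derivable.
- by apply: diff_derivable; exact: differentiableM.
- by apply: diff_derivable; exact: differentiable_sum_of_products.
Unshelve. all: by end_near.
Qed.

Lemma smooth_pairs_derive_products v s :
  smooth_pairs s -> smooth_pairs (derive_products v s).
Proof.
elim: s => [//|p s IH [s1 s2 /IH ss]].
by split; [|exact: smooth_on_derive|split; [|exact: smooth_on_derive|]].
Qed.

Lemma smooth_on_sum_of_products s : smooth_pairs s -> smooth (sum_of_products s).
Proof.
move=> ss; apply: (smooth_on_derive_closed
  (fun H => exists2 s, smooth_pairs s & H = sum_of_products s)); last by exists s.
  by move=> _ [s' ss' ->] x Ux; exact: differentiable_sum_of_products.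
move=> _ v [s' ss' ->]; exists (sum_of_products (derive_products v s')).
  by exists (derive_products v s') => //; exact: smooth_pairs_derive_products.
by move=> x Ux; exact: derive_sum_of_products.
Qed.

Lemma smooth_onM F G : smooth F -> smooth G -> smooth (fun x => F x * G x).
Proof.
move=> sF sG; have -> : (fun x => F x * G x) = sum_of_products [:: (F, G)].
  by apply/funext => x; rewrite /sum_of_products big_seq1.
exact: smooth_on_sum_of_products.
Qed.

Lemma smooth_onD F G : smooth F -> smooth G -> smooth (fun x => F x + G x).
Proof.
move=> sF sG.
have -> : (fun x => F x + G x) = sum_of_products [:: (F, fun _ => 1); (fun _ => 1, G)].
  by apply/funext => x; rewrite /sum_of_products big_cons big_seq1 /= mulr1 mul1r.
by apply: smooth_on_sum_of_products; split; [|exact: smooth_on_cst|split; [exact: smooth_on_cst| |]].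
Qed.

Section inverse_and_sqrt.
Context {F : vec -> R}.
Hypothesis sF : smooth F.

Section inverse.
Hypothesis F_neq0 : forall {x}, U x -> F x != 0.

Let differentiable_inv x : U x -> differentiable (fun y => (F y)^-1) x.
Proof.
by move=> Ux; apply: differentiableV (F_neq0 Ux); exact: smooth_on_differentiable Ux.
Qed.

Let inv_powE m : (fun y => (F y)^-1 ^+ m) = (fun y => (F y)^-1) ^+ m.
Proof. by apply/funext => y; rewrite exprfctE. Qed.

Let differentiable_inv_pow m x : U x -> differentiable (fun y => (F y)^-1 ^+ m) x.
Proof.
move=> Ux; rewrite inv_powE; case: m => [|m]; first exact: differentiable_cst.
exact/differentiableX/differentiable_inv.
Qed.

Let derive_inv_pow m v x : U x ->
  'D_v (fun y => (F y)^-1 ^+ m) x = - m%:R * (F x)^-1 ^+ m.+1 * 'D_v F x.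
Proof.
move=> Ux; have dF : derivable F x v.
  by apply: diff_derivable; exact: smooth_on_differentiable Ux.
have Fx0 := F_neq0 Ux.
rewrite inv_powE deriveX; last exact: derivableV.
rewrite deriveV // /GRing.scale /=.
by case: m => [|m] /=; rewrite ?exprS; field.
Qed.

Lemma smooth_on_inv : smooth (fun x => (F x)^-1).
Proof.
suff sFm m : smooth (fun x => 1 * (F x)^-1 ^+ m).
  have -> : (fun x => (F x)^-1) = (fun x => 1 * (F x)^-1 ^+ 1).
    by apply/funext => x; rewrite mul1r expr1.
  exact: sFm.
apply: (smooth_on_derive_closed
  (fun H => exists G m, smooth G /\ H = fun x => G x * (F x)^-1 ^+ m)).
- move=> _ [G [k [sG ->]]] x Ux; apply: differentiableM.
    exact: smooth_on_differentiable Ux.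
  exact: differentiable_inv_pow.
- move=> _ v [G [k [sG ->]]].
  exists (fun x => ('D_v G x * F x + - k%:R * (G x * 'D_v F x)) * (F x)^-1 ^+ k.+1).
    exists (fun x => 'D_v G x * F x + - k%:R * (G x * 'D_v F x)), k.+1; split => //.
    apply: smooth_onD; first by apply: smooth_onM => //; exact: smooth_on_derive.
    apply: smooth_onM; first exact: smooth_on_cst.
    by apply: smooth_onM => //; exact: smooth_on_derive.
  move=> x Ux; have Fx0 := F_neq0 Ux.
  rewrite deriveM ?derive_inv_pow //.
  + by rewrite /GRing.scale /= exprS; field.
  + by apply: diff_derivable; exact: smooth_on_differentiable Ux.
  + by apply: diff_derivable; exact: differentiable_inv_pow.
- by exists (fun _ => 1), m; split => //; exact: smooth_on_cst.
Qed.

End inverse.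

Section sqrt.
Hypothesis F_gt0 : forall {x}, U x -> 0 < F x.

Lemma smooth_on_sqrt : smooth (fun x => Num.sqrt (F x)).
Proof.
have dsqrtF x : U x -> differentiable (fun y => Num.sqrt (F y)) x.
  move=> Ux; apply: differentiable_scalar_comp _ (is_derive1_sqrt (F_gt0 Ux)).
  exact: smooth_on_differentiable Ux.
suff sGsqrtF : smooth (fun x => 1 * Num.sqrt (F x)).
  by have -> : (fun x => Num.sqrt (F x)) = (fun x => 1 * Num.sqrt (F x))
    by apply/funext => x; rewrite mul1r.
apply: (smooth_on_derive_closed
  (fun H => exists2 G, smooth G & H = fun x => G x * Num.sqrt (F x))).
- move=> _ [G sG ->] x Ux; apply: differentiableM; last exact: dsqrtF.
  exact: smooth_on_differentiable Ux.
- move=> _ v [G sG ->].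
  exists (fun x => ('D_v G x + 2^-1 * (G x * ('D_v F x * (F x)^-1))) * Num.sqrt (F x)).
    exists (fun x => 'D_v G x + 2^-1 * (G x * ('D_v F x * (F x)^-1))) => //.
    apply: smooth_onD; first exact: smooth_on_derive.
    apply: smooth_onM; first exact: smooth_on_cst.
    apply: smooth_onM => //; apply: smooth_onM; first exact: smooth_on_derive.
    by apply: smooth_on_inv => // x Ux; rewrite gt_eqF // F_gt0.
  move=> x Ux; have dF := smooth_on_differentiable sF Ux.
  rewrite deriveM; first last.
  + by apply: diff_derivable; exact: dsqrtF.
  + by apply: diff_derivable; exact: smooth_on_differentiable Ux.
  rewrite (derive_scalar_comp _ dF (is_derive1_sqrt (F_gt0 Ux))) /GRing.scale /=.
  have s_gt0 : 0 < Num.sqrt (F x) by rewrite sqrtr_gt0 F_gt0.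
  have Fs : F x = Num.sqrt (F x) ^+ 2 by rewrite sqr_sqrtr // ltW // F_gt0.
  set s := Num.sqrt (F x) in s_gt0 Fs *; rewrite Fs.
  by field; rewrite gt_eqF.
- by exists (fun _ => 1) => //; exact: smooth_on_cst.
Qed.

End sqrt.
End inverse_and_sqrt.
End smooth_on.

Lemma open_neq0 (R : realType) (V : normedModType R) : open [set x : V | x != 0].
Proof.
have -> : [set x : V | x != 0] = ~` [set 0].
  by apply/seteqP; split => x /=; [move/eqP | move=> x0; apply/eqP].
exact/closed_openC/accessible_closed_set1/hausdorff_accessible/norm_hausdorff.
Qed.

Lemma sqrB_divD_le_sqrB_sqrt (R : realType) (x y : R) : 0 < x -> 0 < y ->
  (x - y) ^+ 2 / (x + y) <= (Num.sqrt (2 * x) - Num.sqrt (2 * y)) ^+ 2.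
Proof.
move=> x0 y0; have a0 : 0 < Num.sqrt (2 * x) by rewrite sqrtr_gt0 mulr_gt0.
have b0 : 0 < Num.sqrt (2 * y) by rewrite sqrtr_gt0 mulr_gt0.
have xa : x = Num.sqrt (2 * x) ^+ 2 / 2 by rewrite sqr_sqrtr ?mulr_ge0 ?ltW //; lra.
have yb : y = Num.sqrt (2 * y) ^+ 2 / 2 by rewrite sqr_sqrtr ?mulr_ge0 ?ltW //; lra.
move: a0 b0 xa yb; set a := Num.sqrt _; set b := Num.sqrt _ => a0 b0 -> ->.
rewrite ler_pdivrMr; last by rewrite -mulrDl divr_gt0 // addr_gt0 // exprn_gt0.
rewrite -subr_ge0.
have -> : (a - b) ^+ 2 * (a ^+ 2 / 2 + b ^+ 2 / 2) - (a ^+ 2 / 2 - b ^+ 2 / 2) ^+ 2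
  = ((a - b) ^+ 2) ^+ 2 / 4 by field.
by rewrite divr_ge0 // sqr_ge0.
Qed.

Section sqrt_twice.
Context {R : realType} {d : nat}.
Notation vec := 'rV[R]_d.

Definition sqrt_twice (f : vec -> R) : vec -> R := fun s => Num.sqrt (2 * f s).

Let hext_sqrt_twice (f : vec -> R) :
  hext (sqrt_twice f) = fun x => Num.sqrt (2 * hext f x).
Proof. by []. Qed.

Context {f : vec -> R}.
Hypothesis f_smooth : sphere_smooth f.
Hypothesis f_gt0 : forall s, on_sphere s -> 0 < f s.

Let hext_f_gt0 x : x != 0 -> 0 < 2 * hext f x.
Proof. by move=> x0; rewrite mulr_gt0 // f_gt0 //; exact: on_sphere_normalize. Qed.

Lemma sphere_smooth_sqrt_twice : sphere_smooth (sqrt_twice f).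
Proof.
rewrite /sphere_smooth hext_sqrt_twice.
apply: (smooth_on_sqrt (open_neq0 _ _) _ hext_f_gt0).
exact: smooth_onM (open_neq0 _ _) _ _ (smooth_on_cst (open_neq0 _ _) _) f_smooth.
Qed.

Lemma sgrad_sqrt_twice s : on_sphere s ->
  dotv (sgrad (sqrt_twice f) s) (sgrad (sqrt_twice f) s)
  = 2^-1 * (dotv (sgrad f s) (sgrad f s) / f s).
Proof.
move=> s1; have s0 : s != 0 by exact: on_sphere_neq0.
have fs0 := f_gt0 _ s1.
have fsE : f s = Num.sqrt (2 * f s) ^+ 2 / 2.
  by rewrite sqr_sqrtr ?mulr_ge0 ?ltW //; lra.
set c := Num.sqrt (2 * f s) in fsE *.
have c0 : c != 0 by rewrite gt_eqF // sqrtr_gt0 mulr_gt0.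
have dF : differentiable (hext f) s := smooth_on_differentiable f_smooth s0.
have D v : 'D_v (hext (sqrt_twice f)) s = c^-1 * 'D_v (hext f) s.
  have dFv : derivable (hext f) s v by exact: diff_derivable.
  have D2 : 'D_v (fun x => 2 * hext f x) s = 2 * 'D_v (hext f) s.
    exact: deriveMl _ 2 _ _ dFv.
  have d2F : differentiable (fun x => 2 * hext f x) s.
    exact: differentiableM (differentiable_cst _ _) dF.
  rewrite hext_sqrt_twice (derive_scalar_comp v d2F (is_derive1_sqrt (hext_f_gt0 _ s0))) D2.
  rewrite hext_on_sphere // -/c.
  by field; exact: c0.
rewrite /dotv mulr_suml mulr_sumr; apply: eq_bigr => i _.
rewrite /sgrad !mxE !D fsE.
by field; exact: c0.
Qed.

End sqrt_twice.

Theorem lemma5p3 (R : realType) (d : nat) (hd : (2 <= d)%N) (b : R -> R)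
  (hb : angular_kernel d b) (cK CP : R) (hcK : 0 < cK) (hCP : 0 < CP)
  (HK : forall f : 'rV[R]_d -> R, even_pos_smooth f ->
     sphere_int (fun s => Gamma2 b (fun x => ln (f x)) (fun x => ln (f x)) s * f s)
     >= cK * sphere_int (fun s => dotv (sgrad f s) (sgrad f s) / f s))
  (HP : forall f : 'rV[R]_d -> R, even_pos_smooth f ->
     ((CP * sphere_int (fun s => dotv (sgrad f s) (sgrad f s)))%:E
     >= sphere_intE (fun s => sphere_intE (fun s' =>
          ((f s' - f s) ^+ 2 * b (dotv s' s))%:E)))%E) :
  forall f : 'rV[R]_d -> R, even_pos_smooth f ->
    ((sphere_int (fun s => Gamma2 b (fun x => ln (f x)) (fun x => ln (f x)) s * f s))%:E
    >= ((2 * cK / CP)%:E *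
        sphere_intE (fun s => sphere_intE (fun s' =>
          ((f s' - f s) ^+ 2 / (f s' + f s) * b (dotv s' s))%:E))))%E.
Proof.
move=> f fE; have [f_smooth [f_gt0 f_even]] := fE.
have b_ge0 : forall t, -1 <= t <= 1 -> 0 <= b t by case: hb => _ [].
set I := sphere_int (fun s => dotv (sgrad f s) (sgrad f s) / f s).
have g_adm : even_pos_smooth (sqrt_twice f).
  split; first exact: sphere_smooth_sqrt_twice.
  split => s s1; first by rewrite sqrtr_gt0 mulr_gt0 // f_gt0.
  by rewrite /sqrt_twice f_even.
have Pg := HP _ g_adm.
have gradg : sphere_int (fun s => dotv (sgrad (sqrt_twice f) s) (sgrad (sqrt_twice f) s))
    = 2^-1 * I.
  rewrite /I -sphere_intZl ?invr_gt0 //.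
  exact: eq_sphere_int (sgrad_sqrt_twice f_smooth f_gt0).
rewrite gradg in Pg.
set Jf := sphere_intE _.
have Jfg : (Jf <= sphere_intE (fun s => sphere_intE (fun s' =>
    ((sqrt_twice f s' - sqrt_twice f s) ^+ 2 * b (dotv s' s))%:E)))%E.
  apply: le_sphere_intE => s s1; apply: le_sphere_intE => s' s'1.
  rewrite lee_fin ler_wpM2r ?b_ge0 ?dotv_on_sphere_bound //.
  exact: sqrB_divD_le_sqrB_sqrt (f_gt0 _ s'1) (f_gt0 _ s1).
apply: le_trans (_ : ((2 * cK / CP)%:E * (CP * (2^-1 * I))%:E <= _)%E).
  apply: lee_wpmul2l; first by rewrite lee_fin divr_ge0 ?mulr_ge0 ?ltW.
  exact: le_trans Jfg Pg.
rewrite -EFinM lee_fin (_ : 2 * cK / CP * (CP * (2^-1 * I)) = cK * I); first exact: HK.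
by field; rewrite gt_eqF.
Qed.
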